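(* Let $q_1,q_2$ be positive probability densities w.r.t. $\mu$ on a common support $\Omega$, let $n\ge1$ and $s_1,s_2\in(0,1)$ with $s_1+s_2=1$, and let $\pi\in(0,1)$. Define $$A(q_1,q_2)=\frac{1}{ns_1s_2}\left[\left(\int_\Omega\frac{q_1q_2}{s_1q_1+s_2q_2}\,d\mu\right)^{-1}-1\right].$$ Then, with the convention $0^{-2}=+\infty$, $$A(q_1,q_2)\le\frac{1}{ns_1s_2}\left[\left(1-\min\!\left(1,\sqrt{JS_\pi(q_1,q_2)/\min(\pi,1-\pi)}\right)\right)^{-2}-1\right],$$ $$A(q_1,q_2)\le\frac{1}{ns_1s_2}\left[\left(1-\min\!\left(1,\sqrt{2KL(q_1,q_2)}\right)\right)^{-2}-1\right],\qquad A(q_1,q_2)\le\frac{1}{ns_1s_2}\left[\left(1-\min\!\left(1,\sqrt{2KL(q_2,q_1)}\right)\right)^{-2}-1\right].$$ In particular, if $JS_\pi(q_1,q_2)\to0$, or $KL(q_1,q_2)\to0$, or $KL(q_2,q_1)\to0$ (with $n,s_1,s_2$ fixed), then $A(q_1,q_2)\to0$.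
   Context: $KL(p_1,p_2)=\int\log(p_1/p_2)\,p_1\,d\mu$. The weighted Jensen–Shannon divergence is $JS_\pi(q_1,q_2)=\pi KL(q_1,q_\pi)+(1-\pi)KL(q_2,q_\pi)$ with $q_\pi=\pi q_1+(1-\pi)q_2$. $A(q_1,q_2)$ is the first-order term of the asymptotic relative mean square error of the asymptotically optimal Bridge estimator of $Z_1/Z_2$ based on i.i.d. samples of sizes $ns_1$ and $ns_2$ from $q_1$ and $q_2$. *)

From HB Require Import structures.
From mathcomp Require Import all_boot all_order all_algebra.
From mathcomp Require Import all_classical all_reals all_analysis.
Set Implicit Arguments. Unset Strict Implicit. Unset Printing Implicit Defensive.
Import Order.TTheory GRing.Theory Num.Theory.
Import numFieldNormedType.Exports.
Local Open Scope classical_set_scope.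
Local Open Scope ring_scope.

Section Defs.
Context {d : measure_display} {T : measurableType d} {R : realType}.
Variable (mu : {measure set T -> \bar R}) (Om : set T).

Definition is_pos_density (q : T -> R) : Prop :=
  measurable_fun Om q /\ (forall x, Om x -> 0 < q x) /\
  (\int[mu]_(x in Om) (q x)%:E = 1)%E.

Definition KL (p1 p2 : T -> R) : \bar R :=
  \int[mu]_(x in Om) (ln (p1 x / p2 x) * p1 x)%:E.

Definition mixture (pi : R) (q1 q2 : T -> R) : T -> R :=
  fun x => pi * q1 x + (1 - pi) * q2 x.

Definition JS (pi : R) (q1 q2 : T -> R) : \bar R :=
  (pi%:E * KL q1 (mixture pi q1 q2) + (1 - pi)%:E * KL q2 (mixture pi q1 q2))%E.

Definition overlap (s1 s2 : R) (q1 q2 : T -> R) : \bar R :=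
  \int[mu]_(x in Om) (q1 x * q2 x / (s1 * q1 x + s2 * q2 x))%:E.

Definition Abridge (n : nat) (s1 s2 : R) (q1 q2 : T -> R) : R :=
  (n%:R * s1 * s2)^-1 * ((fine (overlap s1 s2 q1 q2))^-1 - 1).

End Defs.

Definition bound_term {R : realType} (c : R) (t : \bar R) : \bar R :=
  match t with
  | r%:E => let m := Num.min 1 (Num.sqrt r) in
            if m == 1 then +oo%E else (c * ((1 - m) ^- 2 - 1))%:E
  | +oo%E => +oo%E
  | -oo%E => (c * ((1 - 0) ^- 2 - 1))%:E
  end.

From HB Require Import structures.
From mathcomp Require Import all_boot all_order all_algebra.
From mathcomp Require Import all_classical all_reals all_analysis.
From mathcomp Require Import ring lra.
From mathcomp Require Import measurable_realfun.
Set Implicit Arguments. Unset Strict Implicit. Unset Printing Implicit Defensive.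
Import Order.TTheory GRing.Theory Num.Theory.
Import numFieldNormedType.Exports.
Local Open Scope classical_set_scope.
Local Open Scope ring_scope.

(* Everything is driven by the Bhattacharyya coefficient B = \int sqrt(q1 q2)
   and its deficit u = 1 - B, which lies in [0, 1].
   - Overlap: completing a square, q1 q2 / h >= 2 B sqrt(q1 q2) - B^2 h with
     h = s1 q1 + s2 q2 and \int h = 1, so the overlap O satisfies
     (1 - u)^2 = B^2 <= O <= 1, whence A = c (O^-1 - 1) <= c ((1 - u)^-2 - 1).
   - Divergences: ln t <= t - 1 gives ln(a/b) a >= 2 (a - sqrt(a b)), hence
     KL(p, r) >= 2 (1 - \int sqrt(p r)); this yields KL >= 2 u in both
     directions and, against the mixture, JS_pi >= min(pi, 1 - pi) u.
   - The bound t |-> c ((1 - min(1, sqrt t))^-2 - 1) exceeds c ((1 - u)^-2 - 1)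
     whenever t >= u, and for u <= 1/2 one has O^-1 - 1 <= 8 u, which gives
     the limit statements. *)

Section pointwise_inequalities.
Variable R : realType.

Lemma ln_le_subr1 (x : R) : 0 < x -> ln x <= x - 1.
Proof. by move=> x0; have := expR_ge1Dx (ln x); rewrite lnK ?posrE //; lra. Qed.

Lemma sqrt_mul_le_add (a b : R) : 0 <= a -> 0 <= b ->
  2 * (Num.sqrt a * Num.sqrt b) <= a + b.
Proof.
move=> a0 b0; have := sqr_ge0 (Num.sqrt a - Num.sqrt b).
by rewrite sqrrB !sqr_sqrtr //; lra.
Qed.

(* Pointwise Hellinger bound on the KL integrand: ln(a/b) a >= 2(a - sqrt(ab)),
   i.e. ln t <= t - 1 applied to t = sqrt(b/a). *)
Lemma kl_integrand_ge (a b : R) : 0 < a -> 0 < b ->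
  2 * (a - Num.sqrt a * Num.sqrt b) <= ln (a / b) * a.
Proof.
move=> a0 b0; set x := Num.sqrt a; set z := Num.sqrt b.
have x0 : 0 < x by rewrite sqrtr_gt0.
have z0 : 0 < z by rewrite sqrtr_gt0.
have ea : a = x ^+ 2 by rewrite sqr_sqrtr // ltW.
have eb : b = z ^+ 2 by rewrite sqr_sqrtr // ltW.
have ln_ab : ln (a / b) = - 2 * ln (z / x).
  rewrite ea eb -expr_div_n lnXn ?divr_gt0 //.
  by rewrite !ln_div ?posrE // -mulr_natl; lra.
have zx : z / x * a = x * z by rewrite ea; field; lra.
have := ln_le_subr1 (divr_gt0 z0 x0).
rewrite ln_ab -(ler_pM2r a0) mulrBl mul1r zx; lra.
Qed.

Lemma js_integrand_ge (pi m x y z : R) : 0 <= m -> m <= pi -> m <= 1 - pi ->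
  z ^+ 2 = pi * x ^+ 2 + (1 - pi) * y ^+ 2 ->
  m / 2 * (x ^+ 2 + y ^+ 2 - 2 * (x * y)) <=
  pi * (2 * (x ^+ 2 - x * z)) + (1 - pi) * (2 * (y ^+ 2 - y * z)).
Proof.
move=> m0 mpi mpi' ez.
have h1 : 0 <= (pi - m) * (x - z) ^+ 2 by apply: mulr_ge0; [lra|apply: sqr_ge0].
have h2 : 0 <= (1 - pi - m) * (y - z) ^+ 2 by apply: mulr_ge0; [lra|apply: sqr_ge0].
have h3 : 0 <= m / 2 * (x + y - 2 * z) ^+ 2 by apply: mulr_ge0; [lra|apply: sqr_ge0].
nra.
Qed.

(* Completing the square: for every l and h > 0, ab / h dominates
   2 l sqrt(ab) - l^2 h; used with h = s1 a + s2 b and l = B. *)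
Lemma overlap_integrand_ge (a b l h : R) : 0 <= a -> 0 <= b -> 0 < h ->
  2 * l * (Num.sqrt a * Num.sqrt b) - l ^+ 2 * h <= a * b / h.
Proof.
move=> a0 b0 h0; set G := Num.sqrt a * Num.sqrt b.
have eG : a * b = G ^+ 2 by rewrite /G exprMn !sqr_sqrtr.
rewrite eG ler_pdivlMr //; have := sqr_ge0 (G - l * h); nra.
Qed.

Lemma overlap_integrand_le (a b s1 s2 : R) : 0 < a -> 0 < b ->
  0 < s1 -> 0 < s2 -> s1 + s2 = 1 -> a * b / (s1 * a + s2 * b) <= s2 * a + s1 * b.
Proof.
move=> a0 b0 s10 s20 hs.
have h0 : 0 < s1 * a + s2 * b by apply: addr_gt0; apply: mulr_gt0.
rewrite ler_pdivrMr //; have := sqr_ge0 (a - b).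
have -> : s1 = 1 - s2 by lra.
have : 0 <= s2 * (1 - s2) * (a - b) ^+ 2.
  by apply: mulr_ge0; [apply: mulr_ge0; lra|apply: sqr_ge0].
nra.
Qed.

End pointwise_inequalities.

Section bound_arithmetic.
Variable R : realType.

(* If O >= (1 - u)^2 and u <= r with sqrt r < 1, then O^-1 <= (1 - sqrt r)^-2:
   indeed u <= 1 forces u <= sqrt r. *)
Lemma inv_le_bound (O u r : R) : 0 <= u -> u <= r -> Num.sqrt r < 1 ->
  (1 - u) ^+ 2 <= O -> O^-1 <= (1 - Num.sqrt r) ^- 2.
Proof.
move=> u0 ur sr1 uO.
have sr0 : 0 <= Num.sqrt r by apply: sqrtr_ge0.
have er : r = Num.sqrt r ^+ 2 by rewrite sqr_sqrtr //; lra.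
have r1 : r < 1 by rewrite er; nra.
have u_le_sr : u <= Num.sqrt r.
  by rewrite -(ler_pXn2r (n:=2)) ?nnegrE // -er; nra.
have p0 : 0 < (1 - Num.sqrt r) ^+ 2 by apply: exprn_gt0; lra.
have hO : (1 - Num.sqrt r) ^+ 2 <= O by apply: le_trans uO; nra.
by rewrite lef_pV2 ?posrE //; apply: lt_le_trans hO.
Qed.

Lemma bound_term_ge (c O u : R) (t : \bar R) : 0 < c -> 0 <= u ->
  (1 - u) ^+ 2 <= O -> (u%:E <= t)%E ->
  ((c * (O^-1 - 1))%:E <= bound_term c t)%E.
Proof.
move=> c0 u0 uO; case: t => [r| |] //=; last by move=> _; rewrite leey.
rewrite lee_fin => ur; case: eqP => [_|min_neq1]; first by rewrite leey.
have [sr1|/min_l //] := ltP (Num.sqrt r) 1.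
rewrite lee_fin ler_pM2l // lerD2r.
exact: inv_le_bound u0 ur sr1 uO.
Qed.

Lemma inv_sub1_le_linear (O u : R) : 0 <= u -> u <= 2^-1 ->
  (1 - u) ^+ 2 <= O -> O^-1 - 1 <= 8 * u.
Proof.
move=> u0 u1 uO.
have p0 : 0 < (1 - u) ^+ 2 by apply: exprn_gt0; lra.
rewrite lerBlDr; apply: (@le_trans _ _ (((1 - u) ^+ 2)^-1)).
  by rewrite lef_pV2 ?posrE //; apply: lt_le_trans uO.
rewrite -div1r ler_pdivrMr //.
have : 0 <= u * (2 * (2^-1 - u) * (4 * (1 - u)) + 2 - u) by apply: mulr_ge0 => //; nra.
nra.
Qed.

Lemma bridge_error_cvg0 (c : R) (u O : nat -> R) : 0 < c ->
  (forall k, 0 <= u k) -> (forall k, (1 - u k) ^+ 2 <= O k <= 1) ->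
  u @ \oo --> 0 -> (fun k => c * ((O k)^-1 - 1)) @ \oo --> 0.
Proof.
move=> c0 u0 uO u_cvg0.
apply: (@squeeze_cvgr _ _ _ _ (fun=> 0) (fun k => c * (8 * u k))); last 2 first.
- exact: cvg_cst.
- rewrite -(mulr0 c) -(mulr0 8).
  by apply: cvgM; [exact: cvg_cst|apply: cvgM => //; exact: cvg_cst].
move/cvgrPdist_le : u_cvg0 => /(_ 2^-1 ltac:(by [])); apply: filterS => k.
rewrite sub0r normrN ger0_norm // => uk; have /andP[uOk Ok1] := uO k.
have Ok0 : 0 < O k by apply: lt_le_trans uOk; apply: exprn_gt0; lra.
rewrite ler_pM2l // inv_sub1_le_linear // andbT.
by apply: mulr_ge0; [exact: ltW|rewrite subr_ge0 invf_ge1].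
Qed.

Lemma cvg0_of_dominated (v : nat -> R) (a : R) (X : nat -> \bar R) :
  0 < a -> (forall k, 0 <= v k) -> (forall k, ((a * v k)%:E <= X k)%E) ->
  X @ \oo --> (0 : R)%:E -> v @ \oo --> 0.
Proof.
move=> a0 v0 vX X_cvg0.
have av_cvg0 : (fun k => (a * v k)%:E) @ \oo --> (0 : R)%:E.
  apply: (@squeeze_cvge _ _ _ _ (fun=> (0 : R)%:E) _ X) => //; last exact: cvg_cst.
  by apply: nearW => k; rewrite vX andbT lee_fin mulr_ge0 // ltW.
have [_ /(cvgM (cvg_cst a^-1))] := (fine_cvgP _ _).1 av_cvg0.
rewrite mulr0; apply: cvg_trans; apply: near_eq_cvg; apply: nearW => k /=.
by rewrite mulKf // gt_eqF.
Qed.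

Lemma lee_deficit_scale (a b u : R) (X : \bar R) : 0 <= u -> 0 <= b ->
  1 <= b * a -> ((a * u)%:E <= X)%E -> (u%:E <= b%:E * X)%E.
Proof.
move=> u0 b0 ab auX; apply: le_trans (lee_wpmul2l _ auX); last by rewrite lee_fin.
by rewrite -EFinM lee_fin mulrA ler_peMl.
Qed.

End bound_arithmetic.

Section integration_facts.
Context d (T : measurableType d) (R : realType)
  (mu : {measure set T -> \bar R}) (D : set T) (mD : measurable D).

(* Monotonicity of the integral of real-valued measurable functions, with no
   integrability assumption (the KL integrand need not be integrable). *)
Lemma le_integral_measurable (f g : T -> R) :
  measurable_fun D f -> measurable_fun D g -> (forall x, D x -> g x <= f x) ->
  (\int[mu]_(x in D) (g x)%:E <= \int[mu]_(x in D) (f x)%:E)%E.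
Proof.
move=> /measurable_EFinP mf /measurable_EFinP mg gf.
have gf' (x : T) : x \in D -> ((g x)%:E <= (f x)%:E)%E.
  by move=> /set_mem Dx; rewrite lee_fin gf.
rewrite integralE [leRHS]integralE; apply: leeB.
- apply: ge0_le_integral; rewrite //; try exact: measurable_funepos.
  by move=> x Dx; apply: (@funepos_le _ _ D) => //; exact/mem_set.
- apply: ge0_le_integral; rewrite //; try exact: measurable_funeneg.
  by move=> x Dx; apply: (@funeneg_le _ _ D) => //; exact/mem_set.
Qed.

Lemma integral_EFinE (f : T -> R) : mu.-integrable D (EFin \o f) ->
  (\int[mu]_(x in D) (f x)%:E = (Rintegral mu D f)%:E)%E.
Proof. by move=> intf; rewrite fineK //; exact: integrable_fin_num. Qed.

Lemma integrable_lincomb (f g : T -> R) (k1 k2 : R) :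
  mu.-integrable D (EFin \o f) -> mu.-integrable D (EFin \o g) ->
  mu.-integrable D (EFin \o (fun x => k1 * f x + k2 * g x)).
Proof.
move=> intf intg.
have := integrableD mD (integrableZl mD k1 intf) (integrableZl mD k2 intg).
by apply: eq_integrable => // x _ /=; rewrite EFinD !EFinM.
Qed.

Lemma Rintegral_lincomb (f g : T -> R) (k1 k2 : R) :
  mu.-integrable D (EFin \o f) -> mu.-integrable D (EFin \o g) ->
  Rintegral mu D (fun x => k1 * f x + k2 * g x) =
  k1 * Rintegral mu D f + k2 * Rintegral mu D g.
Proof.
move=> intf intg; rewrite RintegralD //; last 2 first.
- by have := integrableZl mD k1 intf; apply: eq_integrable => // x _ /=; rewrite EFinM.
- by have := integrableZl mD k2 intg; apply: eq_integrable => // x _ /=; rewrite EFinM.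
by rewrite !RintegralZl.
Qed.

Lemma integrable_dominated (f g : T -> R) : measurable_fun D f ->
  mu.-integrable D (EFin \o g) -> (forall x, D x -> `|f x| <= g x) ->
  mu.-integrable D (EFin \o f).
Proof.
move=> mf intg fg; apply: le_integrable intg => //; first exact/measurable_EFinP.
move=> x Dx /=; rewrite lee_fin; apply: le_trans (fg x Dx) _; exact: ler_norm.
Qed.

(* Measurability of the pointwise operations appearing in the integrands;
   division by a positive g is written as multiplication by expR (- ln g). *)
Lemma measurable_fun_sqrt (f : T -> R) : measurable_fun D f ->
  measurable_fun D (fun x => Num.sqrt (f x)).
Proof. exact: measurableT_comp (continuous_measurable_fun (@sqrt_continuous R)). Qed.

Lemma measurable_fun_div (f g : T -> R) : measurable_fun D f -> measurable_fun D g ->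
  (forall x, D x -> 0 < g x) -> measurable_fun D (fun x => f x / g x).
Proof.
move=> mf mg g0.
have m_inv : measurable_fun D (fun x => expR (- ln (g x))).
  apply: measurableT_comp (continuous_measurable_fun (@continuous_expR R)) _.
  exact/measurable_funN/(measurableT_comp (@measurable_ln R)).
apply: eq_measurable_fun (measurable_funM mf m_inv) => x /[1!inE] Dx.
by rewrite /= expRN lnK // posrE g0.
Qed.

Lemma integrable_sqrt_mul (f g h : T -> R) : measurable_fun D f -> measurable_fun D g ->
  (forall x, D x -> 0 <= f x) -> (forall x, D x -> 0 <= g x) ->
  (forall x, D x -> f x + g x <= h x) -> mu.-integrable D (EFin \o h) ->
  mu.-integrable D (EFin \o (fun x => Num.sqrt (f x) * Num.sqrt (g x))).
Proof.
move=> mf mg f0 g0 fgh inth; apply: (integrable_dominated _ inth) => [|x Dx].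
  by apply: measurable_funM; exact: measurable_fun_sqrt.
rewrite ger0_norm ?mulr_ge0 ?sqrtr_ge0 //.
have := sqrt_mul_le_add (f0 x Dx) (g0 x Dx); have := fgh x Dx.
by have := mulr_ge0 (sqrtr_ge0 (f x)) (sqrtr_ge0 (g x)); lra.
Qed.

End integration_facts.

Section densities.
Context d (T : measurableType d) (R : realType)
  (mu : {measure set T -> \bar R}) (Om : set T) (mOm : measurable Om).

Lemma density_integrable (q : T -> R) : is_pos_density mu Om q ->
  mu.-integrable Om (EFin \o q).
Proof.
case=> mq [q0 int_q]; apply/integrableP; split; first exact/measurable_EFinP.
rewrite (eq_integral (fun x => (q x)%:E)) ?int_q ?ltry // => x /[1!inE] Omx.
by rewrite /= ger0_norm // ltW // q0.
Qed.

Lemma density_Rintegral (q : T -> R) : is_pos_density mu Om q ->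
  Rintegral mu Om q = 1.
Proof. by case=> _ [_ int_q]; rewrite /Rintegral int_q. Qed.

Lemma KL_ge_hellinger (p r : T -> R) : is_pos_density mu Om p ->
  measurable_fun Om r -> (forall x, Om x -> 0 < r x) ->
  mu.-integrable Om (EFin \o (fun x => Num.sqrt (p x) * Num.sqrt (r x))) ->
  ((2 * (1 - Rintegral mu Om (fun x => Num.sqrt (p x) * Num.sqrt (r x))))%:E
     <= KL mu Om p r)%E.
Proof.
move=> hp mr r0 int_pr; have [mp [p0 _]] := hp.
set H := fun x => _ * _.
have -> : 2 * (1 - Rintegral mu Om H) = 2 * Rintegral mu Om p + (-2) * Rintegral mu Om H.
  by rewrite (density_Rintegral hp); lra.
rewrite -Rintegral_lincomb ?(density_integrable hp) // -integral_EFinE //; last first.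
  by apply: integrable_lincomb => //; exact: density_integrable.
rewrite /KL; apply: le_integral_measurable => // [||x Omx].
- apply: measurable_funM => //.
  exact: measurableT_comp (@measurable_ln R) (measurable_fun_div mp mr r0).
- apply: measurable_funD; apply: measurable_funM => //.
  by apply: measurable_funM; exact: measurable_fun_sqrt.
- by have := kl_integrand_ge (p0 x Omx) (r0 x Omx); rewrite /H; lra.
Qed.

Definition bhattacharyya (q1 q2 : T -> R) : R :=
  Rintegral mu Om (fun x => Num.sqrt (q1 x) * Num.sqrt (q2 x)).

Lemma bhattacharyyaC (q1 q2 : T -> R) : bhattacharyya q1 q2 = bhattacharyya q2 q1.
Proof. by apply: eq_Rintegral => x _; rewrite mulrC. Qed.

Section two_densities.
Variables q1 q2 : T -> R.
Hypotheses (h1 : is_pos_density mu Om q1) (h2 : is_pos_density mu Om q2).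

Let int1 := density_integrable h1.
Let int2 := density_integrable h2.
Let m1 : measurable_fun Om q1. Proof. by case: h1. Qed.
Let m2 : measurable_fun Om q2. Proof. by case: h2. Qed.
Let p1 : forall x, Om x -> 0 < q1 x. Proof. by case: h1 => _ []. Qed.
Let p2 : forall x, Om x -> 0 < q2 x. Proof. by case: h2 => _ []. Qed.

Let integrable_sqrt_mul_dens (f g : T -> R) :
  measurable_fun Om f -> measurable_fun Om g ->
  (forall x, Om x -> 0 < f x) -> (forall x, Om x -> 0 < g x) ->
  (forall x, Om x -> f x + g x <= 2 * q1 x + 2 * q2 x) ->
  mu.-integrable Om (EFin \o (fun x => Num.sqrt (f x) * Num.sqrt (g x))).
Proof.
move=> mf mg f0 g0 fg; apply: integrable_sqrt_mul mf mg _ _ fg _ => //.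
- by move=> x /f0 /ltW.
- by move=> x /g0 /ltW.
- exact: integrable_lincomb.
Qed.

Lemma bhattacharyya_integrable :
  mu.-integrable Om (EFin \o (fun x => Num.sqrt (q1 x) * Num.sqrt (q2 x))).
Proof.
by apply: integrable_sqrt_mul_dens => // x Omx; have := p1 Omx; have := p2 Omx; lra.
Qed.

(* B <= 1 by the AM-GM inequality sqrt(q1 q2) <= (q1 + q2) / 2. *)
Lemma bhattacharyya_le1 : bhattacharyya q1 q2 <= 1.
Proof.
have -> : 1 = Rintegral mu Om (fun x => 2^-1 * q1 x + 2^-1 * q2 x).
  by rewrite Rintegral_lincomb // (density_Rintegral h1) (density_Rintegral h2); lra.
apply: le_Rintegral => //; first exact: bhattacharyya_integrable.
  exact: integrable_lincomb.
by move=> x Omx; have := sqrt_mul_le_add (ltW (p1 Omx)) (ltW (p2 Omx)); lra.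
Qed.

Lemma KL_ge_bhattacharyya :
  ((2 * (1 - bhattacharyya q1 q2))%:E <= KL mu Om q1 q2)%E.
Proof. exact: KL_ge_hellinger h1 m2 p2 bhattacharyya_integrable. Qed.

Section overlap_bounds.
Variables s1 s2 : R.
Hypotheses (s10 : 0 < s1) (s20 : 0 < s2) (hs : s1 + s2 = 1).

Let mix (x : T) := s1 * q1 x + s2 * q2 x.
Let ov (x : T) := q1 x * q2 x / mix x.
Let mix_gt0 x : Om x -> 0 < mix x.
Proof. by move=> Omx; apply: addr_gt0; apply: mulr_gt0 => //; [exact: p1|exact: p2]. Qed.
Let int_mix : mu.-integrable Om (EFin \o mix). Proof. exact: integrable_lincomb. Qed.

Let int_ov : mu.-integrable Om (EFin \o ov).
Proof.
have int_rev := integrable_lincomb mOm s2 s1 int1 int2.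
apply: (integrable_dominated mOm _ int_rev) => [|x Omx].
  apply: measurable_fun_div mix_gt0; first exact: measurable_funM.
  by apply: measurable_funD; apply: measurable_funM.
rewrite ger0_norm; last by rewrite divr_ge0 ?mulr_ge0 ?ltW ?p1 ?p2 ?mix_gt0.
exact: overlap_integrand_le (p1 Omx) (p2 Omx) s10 s20 hs.
Qed.

Lemma overlapE : overlap mu Om s1 s2 q1 q2 = (Rintegral mu Om ov)%:E.
Proof. by rewrite /overlap -(integral_EFinE mOm int_ov). Qed.

Lemma overlap_le1 : fine (overlap mu Om s1 s2 q1 q2) <= 1.
Proof.
rewrite overlapE /= -hs addrC -[s1]mulr1 -[s2]mulr1.
rewrite -{1}(density_Rintegral h1) -(density_Rintegral h2) -Rintegral_lincomb //.
apply: le_Rintegral => //; first exact: integrable_lincomb.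
by move=> x Omx; exact: overlap_integrand_le (p1 Omx) (p2 Omx) s10 s20 hs.
Qed.

(* The overlap is at least the squared Bhattacharyya coefficient: integrate
   overlap_integrand_ge with l = B, using \int mix = 1. *)
Lemma overlap_ge_bhattacharyya_sqr :
  bhattacharyya q1 q2 ^+ 2 <= fine (overlap mu Om s1 s2 q1 q2).
Proof.
set B := bhattacharyya q1 q2.
have int_mix1 : Rintegral mu Om mix = 1.
  by rewrite Rintegral_lincomb // (density_Rintegral h1) (density_Rintegral h2) !mulr1.
have -> : B ^+ 2 = Rintegral mu Om (fun x =>
    (2 * B) * (Num.sqrt (q1 x) * Num.sqrt (q2 x)) + (- B ^+ 2) * mix x).
  by rewrite Rintegral_lincomb ?int_mix1 //; [rewrite /B /bhattacharyya; ring|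
    exact: bhattacharyya_integrable].
rewrite overlapE /=; apply: le_Rintegral => //.
  by apply: integrable_lincomb => //; exact: bhattacharyya_integrable.
move=> x Omx; have := overlap_integrand_ge B (ltW (p1 Omx)) (ltW (p2 Omx)) (mix_gt0 Omx).
by rewrite /ov; lra.
Qed.

End overlap_bounds.

Section js_bound.
Variable pi : R.
Hypotheses (pi0 : 0 < pi) (pi1 : pi < 1).

Let m := mixture pi q1 q2.
Let hel1 := Rintegral mu Om (fun x => Num.sqrt (q1 x) * Num.sqrt (m x)).
Let hel2 := Rintegral mu Om (fun x => Num.sqrt (q2 x) * Num.sqrt (m x)).

Let m_gt0 x : Om x -> 0 < m x.
Proof.
move=> Omx; apply: addr_gt0; apply: mulr_gt0; rewrite ?subr_gt0 //; [exact: p1|exact: p2].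
Qed.
Let m_meas : measurable_fun Om m.
Proof. by apply: measurable_funD; apply: measurable_funM. Qed.
Let m_le x : Om x -> m x <= q1 x + q2 x.
Proof.
move=> Omx; have pi1' : 0 < 1 - pi by rewrite subr_gt0.
have := mulr_gt0 pi1' (p1 Omx); have := mulr_gt0 pi0 (p2 Omx).
by rewrite /m /mixture; lra.
Qed.

Let int_hel1 :
  mu.-integrable Om (EFin \o (fun x => Num.sqrt (q1 x) * Num.sqrt (m x))).
Proof.
apply: integrable_sqrt_mul_dens => // x Omx.
by have := m_le Omx; have := p1 Omx; have := p2 Omx; lra.
Qed.
Let int_hel2 :
  mu.-integrable Om (EFin \o (fun x => Num.sqrt (q2 x) * Num.sqrt (m x))).
Proof.
apply: integrable_sqrt_mul_dens => // x Omx.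
by have := m_le Omx; have := p1 Omx; have := p2 Omx; lra.
Qed.

Lemma JS_ge_hellinger_mixture :
  ((pi * (2 * (1 - hel1)) + (1 - pi) * (2 * (1 - hel2)))%:E <= JS mu Om pi q1 q2)%E.
Proof.
rewrite /JS EFinD !EFinM; apply: leeD; apply: lee_wpmul2l.
- by rewrite lee_fin ltW.
- exact: KL_ge_hellinger h1 m_meas m_gt0 int_hel1.
- by rewrite lee_fin subr_ge0 ltW.
- exact: KL_ge_hellinger h2 m_meas m_gt0 int_hel2.
Qed.

(* Integrating js_integrand_ge with x, y, z = sqrt q1, sqrt q2, sqrt m. *)
Lemma hellinger_mixture_ge (w : R) : 0 <= w -> w <= pi -> w <= 1 - pi ->
  w * (1 - bhattacharyya q1 q2) <=
  pi * (2 * (1 - hel1)) + (1 - pi) * (2 * (1 - hel2)).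
Proof.
move=> w0 wpi wpi'.
have int_G := bhattacharyya_integrable.
have -> : w * (1 - bhattacharyya q1 q2) = Rintegral mu Om (fun x =>
    (w / 2) * (1 * q1 x + 1 * q2 x) + (- w) * (Num.sqrt (q1 x) * Num.sqrt (q2 x))).
  rewrite Rintegral_lincomb //; last exact: integrable_lincomb.
  rewrite Rintegral_lincomb // (density_Rintegral h1) (density_Rintegral h2).
  by rewrite /bhattacharyya; lra.
have -> : pi * (2 * (1 - hel1)) + (1 - pi) * (2 * (1 - hel2)) = Rintegral mu Om
    (fun x => pi * (2 * q1 x + (-2) * (Num.sqrt (q1 x) * Num.sqrt (m x))) +
              (1 - pi) * (2 * q2 x + (-2) * (Num.sqrt (q2 x) * Num.sqrt (m x)))).
  rewrite Rintegral_lincomb //; try exact: integrable_lincomb.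
  rewrite !Rintegral_lincomb // (density_Rintegral h1) (density_Rintegral h2).
  by rewrite /hel1 /hel2; lra.
apply: le_Rintegral => //;
  try by apply: integrable_lincomb => //; exact: integrable_lincomb.
move=> x Omx.
have ez : Num.sqrt (m x) ^+ 2 =
    pi * Num.sqrt (q1 x) ^+ 2 + (1 - pi) * Num.sqrt (q2 x) ^+ 2.
  by rewrite !sqr_sqrtr ?ltW ?m_gt0 ?p1 ?p2.
have := js_integrand_ge w0 wpi wpi' ez.
have q10 := ltW (p1 Omx); have q20 := ltW (p2 Omx).
by rewrite !sqr_sqrtr //; lra.
Qed.

Lemma JS_ge_bhattacharyya :
  ((Num.min pi (1 - pi) * (1 - bhattacharyya q1 q2))%:E <= JS mu Om pi q1 q2)%E.
Proof.
apply: le_trans JS_ge_hellinger_mixture; rewrite lee_fin.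
by apply: hellinger_mixture_ge; rewrite ?ge_min ?lexx ?orbT // le_min ltW // subr_ge0 ltW.
Qed.

End js_bound.
End two_densities.

Lemma deficit_bounds (q1 q2 : T -> R) (s1 s2 pi : R) :
  is_pos_density mu Om q1 -> is_pos_density mu Om q2 ->
  0 < s1 -> 0 < s2 -> s1 + s2 = 1 -> 0 < pi -> pi < 1 ->
  let u := 1 - bhattacharyya q1 q2 in
  let O := fine (overlap mu Om s1 s2 q1 q2) in
  [/\ 0 <= u, (1 - u) ^+ 2 <= O <= 1,
      ((Num.min pi (1 - pi) * u)%:E <= JS mu Om pi q1 q2)%E,
      ((2 * u)%:E <= KL mu Om q1 q2)%E & ((2 * u)%:E <= KL mu Om q2 q1)%E].
Proof.
move=> h1 h2 s10 s20 hs pi0 pi1 u O; split.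
- by rewrite subr_ge0 bhattacharyya_le1.
- by rewrite subKr overlap_ge_bhattacharyya_sqr //= overlap_le1.
- exact: JS_ge_bhattacharyya.
- exact: KL_ge_bhattacharyya.
- by rewrite /u bhattacharyyaC; exact: KL_ge_bhattacharyya.
Qed.

End densities.

Theorem proposition4 (d : measure_display) (T : measurableType d) (R : realType)
  (mu : {measure set T -> \bar R}) (Om : set T) (mOm : measurable Om)
  (n : nat) (s1 s2 pi : R)
  (hn : (0 < n)%N) (hs1 : 0 < s1 < 1) (hs2 : 0 < s2 < 1) (hs : s1 + s2 = 1)
  (hpi : 0 < pi < 1) :
  (forall q1 q2 : T -> R,
    is_pos_density mu Om q1 -> is_pos_density mu Om q2 ->
    let c := (n%:R * s1 * s2)^-1 in
    [/\ ((Abridge mu Om n s1 s2 q1 q2)%:E <=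
           bound_term c (JS mu Om pi q1 q2 * (Num.min pi (1 - pi))^-1%:E))%E,
        ((Abridge mu Om n s1 s2 q1 q2)%:E <= bound_term c (2%:E * KL mu Om q1 q2))%E
      & ((Abridge mu Om n s1 s2 q1 q2)%:E <= bound_term c (2%:E * KL mu Om q2 q1))%E])
  /\
  (forall Q1 Q2 : nat -> T -> R,
    (forall k, is_pos_density mu Om (Q1 k)) ->
    (forall k, is_pos_density mu Om (Q2 k)) ->
    ((fun k => JS mu Om pi (Q1 k) (Q2 k)) @ \oo --> (0 : R)%:E) \/
    ((fun k => KL mu Om (Q1 k) (Q2 k)) @ \oo --> (0 : R)%:E) \/
    ((fun k => KL mu Om (Q2 k) (Q1 k)) @ \oo --> (0 : R)%:E) ->
    (fun k => Abridge mu Om n s1 s2 (Q1 k) (Q2 k)) @ \oo --> 0).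
Proof.
move: hs1 hs2 hpi => /andP[s10 _] /andP[s20 _] /andP[pi0 pi1].
have c0 : 0 < (n%:R * s1 * s2)^-1 by rewrite invr_gt0 !mulr_gt0 // ltr0n.
have w0 : 0 < Num.min pi (1 - pi) by rewrite lt_min pi0 subr_gt0.
have bounds q1 q2 (h1 : is_pos_density mu Om q1) (h2 : is_pos_density mu Om q2) :=
  deficit_bounds mOm h1 h2 s10 s20 hs pi0 pi1.
split=> [q1 q2 h1 h2 c|Q1 Q2 hQ1 hQ2 div_cvg0].
  (* each divergence, suitably rescaled, dominates the deficit u *)
  have [u0 /andP[uO _] hJ hK12 hK21] := bounds q1 q2 h1 h2.
  split; apply: bound_term_ge uO _ => //.
  - rewrite muleC; apply: lee_deficit_scale hJ => //.
      by rewrite invr_ge0 ltW.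
    by rewrite mulVf ?gt_eqF.
  - by apply: lee_deficit_scale hK12 => //; lra.
  - by apply: lee_deficit_scale hK21 => //; lra.
(* it suffices that the deficits u_k tend to 0, and each hypothesis forces it *)
have u0 k : 0 <= 1 - bhattacharyya mu Om (Q1 k) (Q2 k).
  by have [] := bounds _ _ (hQ1 k) (hQ2 k).
apply: (bridge_error_cvg0 c0 u0) => [k|].
  by have [] := bounds _ _ (hQ1 k) (hQ2 k).
case: div_cvg0 => [JS0|[KL0|KL0]].
- apply: (cvg0_of_dominated w0 u0 _ JS0) => k.
  by have [] := bounds _ _ (hQ1 k) (hQ2 k).
- apply: (cvg0_of_dominated (a:=2) _ u0 _ KL0) => // k.
  by have [] := bounds _ _ (hQ1 k) (hQ2 k).
- apply: (cvg0_of_dominated (a:=2) _ u0 _ KL0) => // k.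
  by have [] := bounds _ _ (hQ1 k) (hQ2 k).
Qed.
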